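(* Let $\mathcal K$ be an abstract Krivine structure. For all $a,b\in\mathcal P_\perp(\Pi)$, $$\overline{a\circ_\bullet b}=\overline{\bigcup\{c\in\mathcal P_\perp(\Pi): b\to_\perp c\subseteq a\}},$$ i.e. $\overline{a\circ_\bullet b}=a\,\sharp\,b$, where $a\,\sharp\,b$ is the infimum of $\{c\in\mathcal P_\perp(\Pi): a\le b\to_\perp c\}$ in $\mathcal P_\perp(\Pi)$ ordered by $a\le b\iff a\supseteq b$.
   Context: An abstract Krivine structure $\mathcal K$ consists of sets $\Lambda,\Pi$, a relation $\perp\subseteq\Lambda\times\Pi$, a map $\mathrm{push}$ written $t\cdot\pi$ (associating to the right), an application $ts$ on $\Lambda$, a subset $\mathrm{QP}\subseteq\Lambda$ closed under application, and $\mathsf K,\mathsf S\in\mathrm{QP}$ with: $t\perp s\cdot\pi\Rightarrow ts\perp\pi$; $t\perp\pi\Rightarrow\mathsf K\perp t\cdot s\cdot\pi$; $tu(su)\perp\pi\Rightarrow\mathsf S\perp t\cdot s\cdot u\cdot\pi$. Polars: $L^\perp=\{\pi:\forall t\in L,\ t\perp\pi\}$, ${}^\perp P=\{t:\forall\pi\in P,\ t\perp\pi\}$; $\overline P=({}^\perp P)^\perp$; $\mathcal P_\perp(\Pi)=\{P:\overline P=P\}$. For $P,Q\subseteq\Pi$: $P\to_\perp Q=\overline{\{t\cdot\pi:t\in{}^\perp P,\pi\in Q\}}$ and $P\circ_\bullet Q=\{\pi\in\Pi: t\cdot\pi'\in P\ \forall t\in{}^\perp Q,\ \pi'\in\overline{\{\pi\}}\}$.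 *)

Record AKS := {
  Lam : Type;
  Pi : Type;
  perp : Lam -> Pi -> Prop;
  push : Lam -> Pi -> Pi;
  app : Lam -> Lam -> Lam;
  QP : Lam -> Prop;
  QP_app : forall t s, QP t -> QP s -> QP (app t s);
  Kc : Lam;
  Sc : Lam;
  K_QP : QP Kc;
  S_QP : QP Sc;
  ax_push : forall t s pi, perp t (push s pi) -> perp (app t s) pi;
  ax_K : forall t s pi, perp t pi -> perp Kc (push t (push s pi));
  ax_S : forall t s u pi, perp (app (app t u) (app s u)) pi ->
           perp Sc (push t (push s (push u pi)))
}.

Section Defs.
Variable K : AKS.

Definition polarL (L : Lam K -> Prop) : Pi K -> Prop :=
  fun pi => forall t, L t -> perp K t pi.
Definition polarP (P : Pi K -> Prop) : Lam K -> Prop :=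
  fun t => forall pi, P pi -> perp K t pi.
Definition bar (P : Pi K -> Prop) : Pi K -> Prop := polarL (polarP P).
Definition is_closed (P : Pi K -> Prop) : Prop := bar P = P.
Definition arrow (P Q : Pi K -> Prop) : Pi K -> Prop :=
  bar (fun rho => exists t pi, polarP P t /\ Q pi /\ rho = push K t pi).
Definition circ (P Q : Pi K -> Prop) : Pi K -> Prop :=
  fun pi => forall t pi', polarP Q t -> bar (fun x => x = pi) pi' ->
              P (push K t pi').
Definition subset (P Q : Pi K -> Prop) : Prop := forall pi, P pi -> Q pi.
Definition sharp_union (a b : Pi K -> Prop) : Pi K -> Prop :=
  fun pi => exists c, is_closed c /\ subset (arrow b c) a /\ c pi.
End Defs.

(* Proof idea: the two sets already coincide before taking closures, as soon
   as a is closed.  A stack pi lies in a o b exactly when the closed set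
   c := closure of {pi} satisfies b -> c included in a; and any closed c with
   b -> c included in a and pi in c contains closure {pi}, so pi lies in
   a o b. *)
From Stdlib Require Import FunctionalExtensionality PropExtensionality.

Section ClosureOperator.
Variable K : AKS.

Lemma subset_antisym (P Q : Pi K -> Prop) :
  subset K P Q -> subset K Q P -> P = Q.
Proof.
  intros HPQ HQP. apply functional_extensionality; intro pi.
  apply propositional_extensionality; split; [apply HPQ | apply HQP].
Qed.

Lemma subset_bar (P : Pi K -> Prop) : subset K P (bar K P).
Proof. intros pi Hpi t Ht. exact (Ht pi Hpi). Qed.

Lemma bar_mono (P Q : Pi K -> Prop) :
  subset K P Q -> subset K (bar K P) (bar K Q).
Proof. intros HPQ pi Hpi t Ht. apply Hpi. intros p Hp. exact (Ht p (HPQ p Hp)). Qed.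

Lemma bar_subset_closed (P c : Pi K -> Prop) :
  is_closed K c -> subset K P c -> subset K (bar K P) c.
Proof. intros Hc HPc. rewrite <- Hc. exact (bar_mono P c HPc). Qed.

(* The closure of any set is closed, since a triple polar is a single polar. *)
Lemma is_closed_bar (P : Pi K -> Prop) : is_closed K (bar K P).
Proof.
  apply subset_antisym; [| apply subset_bar].
  intros pi Hpi t Ht. apply Hpi. intros p Hp. exact (Hp t Ht).
Qed.

Lemma arrow_subset_closed (a b c : Pi K -> Prop) :
  is_closed K a ->
  (forall t pi, polarP K b t -> c pi -> a (push K t pi)) ->
  subset K (arrow K b c) a.
Proof.
  intros Ha Hpush. apply bar_subset_closed; [exact Ha |].
  intros rho [t [pi [Ht [Hpi ->]]]]. exact (Hpush t pi Ht Hpi).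
Qed.

Lemma arrow_subset_push (a b c : Pi K -> Prop) t pi :
  subset K (arrow K b c) a -> polarP K b t -> c pi -> a (push K t pi).
Proof.
  intros Harrow Ht Hpi. apply Harrow, subset_bar.
  exists t, pi. auto.
Qed.

Lemma circ_eq_sharp_union (a b : Pi K -> Prop) :
  is_closed K a -> circ K a b = sharp_union K a b.
Proof.
  intro Ha. apply subset_antisym.
  - intros pi Hpi. exists (bar K (fun x => x = pi)). split; [| split].
    + apply is_closed_bar.
    + apply arrow_subset_closed; [exact Ha |].
      intros t p Ht Hp. exact (Hpi t p Ht Hp).
    + apply subset_bar. reflexivity.
  - intros pi [c [Hc [Harrow Hpi]]] t p Ht Hp.
    apply (arrow_subset_push a b c); [exact Harrow | exact Ht |].
    apply (bar_subset_closed (fun x => x = pi) c Hc); [| exact Hp].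
    intros q ->. exact Hpi.
Qed.

End ClosureOperator.

Theorem mainTheorem8 (K : AKS) (a b : Pi K -> Prop) :
  is_closed K a -> is_closed K b ->
  bar K (circ K a b) = bar K (sharp_union K a b).
Proof.
  intros Ha _. rewrite (circ_eq_sharp_union K a b Ha). reflexivity.
Qed.
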